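(* For packed words $f,g$ of length $n$, write $f\leq g$ if (1) for all $i,j\in[n]$, ($i\geq j$ and $f(i)\leq f(j)$) implies $g(i)\leq g(j)$; and (2) for all $i,j\in[n]$, $g(i)=g(j)$ implies $f(i)=f(j)$. Then $\leq$ is a partial order on the set $PW(n)$ of packed words of length $n$. Moreover, for every $f\in PW(n)$, $$\phi(P_f)=\sum_{g\in PW(n),\ f\leq g} g,$$ i.e. the set of linear extensions of $P_f$ is $\{g\in PW(n)\mid f\leq g\}$.
   Context: A packed word of length $n$ is a word $w(1)\cdots w(n)$ of positive integers whose set of letters is $\{1,\dots,k\}$ for some $k$; equivalently a surjection $[n]\to[k]$. A weak plane poset is a finite set with two partial orders $\leq_1,\leq_2$ such that $x\leq_1 y$ and $x\leq_2 y$ imply $x=y$, and such that $x\preceq y\iff(x\leq_1 y$ or $x\leq_2 y)$ is a total quasi-order; write $x\equiv y$ if $x\preceq y$ and $y\preceq x$. For a packed word $w$ of length $n$, $P_w=([n],\leq_1,\leq_2)$ with $i\leq_1 j\iff(i\geq j$ and $w(i)\leq w(j))$ and $i\leq_2 j\iff(i\leq j$ and $w(i)\leq w(j))$. For a weak plane poset $P$ with underlying set $[n]$ such that the total order $x\ll y\iff(y\leq_1 x$ or $x\leq_2 y)$ is the natural order of $[n]$ (as is the case for $P_w$), a linear extension of $P$ is a surjection $f:[n]\to[k]$ (seen as the packed word $f(1)\cdots f(n)$) such that (a) $i\leq_1 j\Rightarrow f(i)\leq f(j)$ and (b) $f(i)=f(j)\Rightarrow i\equiv j$. Let $\mathbf{WQSym}$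 be the vector space with basis all packed words. The linear map $\phi$ from the span of isomorphism classes of weak plane posets to $\mathbf{WQSym}$ sends $P$ to the sum of its linear extensions. *)

From mathcomp Require Import all_boot.
Set Implicit Arguments. Unset Strict Implicit. Unset Printing Implicit Defensive.

(* A word of length n: positions [n] are encoded as 'I_n (position i+1 ~ ordinal i),
   letters are natural numbers. *)
Definition word (n : nat) := {ffun 'I_n -> nat}.

Definition packed (n : nat) (w : word n) : Prop :=
  exists k : nat, forall m : nat, (exists i : 'I_n, w i = m) <-> (1 <= m <= k).

Definition pw_le (n : nat) (f g : word n) : Prop :=
  (forall i j : 'I_n, (j <= i) && (f i <= f j) -> g i <= g j) /\
  (forall i j : 'I_n, g i = g j -> f i = f j).

Record biorder (n : nat) := BiOrder { le1 : rel 'I_n; le2 : rel 'I_n }.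

Definition is_partial_order (n : nat) (r : rel 'I_n) : Prop :=
  reflexive r /\ antisymmetric r /\ transitive r.

Definition bprec (n : nat) (P : biorder n) : rel 'I_n :=
  fun x y => le1 P x y || le2 P x y.

Definition bequiv (n : nat) (P : biorder n) : rel 'I_n :=
  fun x y => bprec P x y && bprec P y x.

Definition weak_plane_poset (n : nat) (P : biorder n) : Prop :=
  is_partial_order (le1 P) /\ is_partial_order (le2 P) /\
  (forall x y, le1 P x y -> le2 P x y -> x = y) /\
  reflexive (bprec P) /\ transitive (bprec P) /\
  (forall x y, bprec P x y || bprec P y x).

Definition natural_ll (n : nat) (P : biorder n) : Prop :=
  forall x y : 'I_n, (le1 P y x || le2 P x y) = (x <= y).

Definition linear_extension (n : nat) (P : biorder n) (f : word n) : Prop :=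
  packed f /\
  (forall i j, le1 P i j -> f i <= f j) /\
  (forall i j, f i = f j -> bequiv P i j).

Definition P_of (n : nat) (w : word n) : biorder n :=
  BiOrder (fun i j : 'I_n => (j <= i) && (w i <= w j))
          (fun i j : 'I_n => (i <= j) && (w i <= w j)).

(** Conditions (1) and (2) of [f <= g] are exactly the two defining conditions
    of a linear extension of [P_f], once one notices that in [P_f] the
    quasi-order [i <=_1 j or i <=_2 j] is just [f i <= f j].  For antisymmetry, [f <= g <= f]
    forces [f] and [g] to compare positions identically, and a packed word
    is determined by that comparison: its letters are [1, 2, ...] in order. *)

From mathcomp Require Import all_boot.
From mathcomp Require Import zify.

Set Implicit Arguments.
Unset Strict Implicit.
Unset Printing Implicit Defensive.

Lemma packed_eq_of_same_le n (f g : word n) : packed f -> packed g ->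
  (forall i j, (f i <= f j) = (g i <= g j)) -> f = g.
Proof.
move=> [kf packf] [kg packg] same_le.
have f_range (i : 'I_n) : 1 <= f i <= kf by apply/packf; exists i.
have g_range (i : 'I_n) : 1 <= g i <= kg by apply/packg; exists i.
have same_lt (i j : 'I_n) : (f i < f j) = (g i < g j) by rewrite !ltnNge same_le.
suff agree m : forall i : 'I_n, f i = m -> g i = m.
  by apply/ffunP=> i; rewrite (agree (f i) i).
elim/ltn_ind: m => m IH i fi.
have [m_le1 | m_gt1] := leqP m 1.
  have [l gl] : exists l, g l = 1 by apply/packg; have := g_range i; lia.
  have : g i <= g l by rewrite -same_le fi; have := f_range l; lia.
  by have := f_range i; have := g_range i; lia.
have [j fj] : exists j, f j = m.-1 by apply/packf; have := f_range i; lia.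
have gj : g j = m.-1 by apply: IH fj; lia.
have gi_gt : m.-1 < g i by rewrite -gj -same_lt fj fi; lia.
have [gi_le | gi_gt_m] := leqP (g i) m; first lia.
(* Otherwise the letter [m] of [g] lies strictly between [g j] and [g i],
   whereas no letter of [f] lies strictly between [f j = m - 1] and [f i = m]. *)
have [l gl] : exists l, g l = m by apply/packg; have := g_range i; lia.
have := same_lt j l; have := same_lt l i; lia.
Qed.

Lemma pw_le_refl n (f : word n) : pw_le f f.
Proof. by split=> // i j /andP[]. Qed.

Lemma pw_le_trans n (f g h : word n) : pw_le f g -> pw_le g h -> pw_le f h.
Proof.
move=> [fg_le fg_eq] [gh_le gh_eq]; split; last by move=> i j /gh_eq /fg_eq.
by move=> i j /andP[ji fij]; apply: gh_le; rewrite ji fg_le // ji fij.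
Qed.

Lemma pw_le_antisym_le n (f g : word n) : pw_le f g -> pw_le g f ->
  forall i j, (f i <= f j) = (g i <= g j).
Proof.
move=> [fg_le fg_eq] [gf_le gf_eq] i j.
have le_down (a b : 'I_n) : b <= a -> (f a <= f b) = (g a <= g b).
  by move=> ba; apply/idP/idP=> le_ab; [apply: fg_le | apply: gf_le];
     rewrite ba le_ab.
have same_eq : (f i == f j) = (g i == g j).
  by apply/eqP/eqP=> [/gf_eq | /fg_eq].
have [ji | /ltnW ij] := leqP j i; first exact: le_down.
by rewrite (leq_eqVlt (f i)) (leq_eqVlt (g i)) same_eq !ltnNge le_down.
Qed.

Lemma bprec_P_of n (w : word n) i j : bprec (P_of w) i j = (w i <= w j).
Proof. by rewrite /bprec /= -andb_orl leq_total. Qed.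

Lemma bequiv_P_of n (w : word n) i j : bequiv (P_of w) i j = (w i == w j).
Proof. by rewrite /bequiv !bprec_P_of eqn_leq. Qed.

Lemma linear_extension_P_of n (f g : word n) :
  linear_extension (P_of f) g <-> packed g /\ pw_le f g.
Proof.
split=> -[packg [ext_le ext_eq]]; do 2!split=> //.
- by move=> i j /ext_eq; rewrite bequiv_P_of => /eqP.
- by move=> i j /ext_eq/eqP; rewrite bequiv_P_of.
Qed.

Theorem mainTheorem4 (n : nat) :
  (* <= is a partial order on PW(n) *)
  (forall f : word n, packed f -> pw_le f f) /\
  (forall f g : word n, packed f -> packed g -> pw_le f g -> pw_le g f -> f = g) /\
  (forall f g h : word n, packed f -> packed g -> packed h ->
      pw_le f g -> pw_le g h -> pw_le f h) /\
  (* the linear extensions of P_f are exactly the packed g with f <= g *)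
  (forall f : word n, packed f ->
     forall g : word n, linear_extension (P_of f) g <-> (packed g /\ pw_le f g)).
Proof.
split; [|split; [|split]].
- by move=> f _; apply: pw_le_refl.
- move=> f g packf packg fg gf.
  exact: packed_eq_of_same_le packf packg (pw_le_antisym_le fg gf).
- by move=> f g h _ _ _; apply: pw_le_trans.
- by move=> f _ g; apply: linear_extension_P_of.
Qed.
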